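(* There is an absolute constant $c>0$ such that for every positive integer $s$ and all real $0<a<b$, there exist probability distributions $P$ and $Q$ supported on $[a,b]$ such that $\int x^\ell\,dP(x)=\int x^\ell\,dQ(x)$ for $\ell=0,1,\dots,s$, and $$\Big|\int_a^b \Big|x-\tfrac{a+b}{2}\Big|\,dP(x)-\int_a^b\Big|x-\tfrac{a+b}{2}\Big|\,dQ(x)\Big|\ \ge\ c\,\frac{b-a}{s}.$$ *)

From Stdlib Require Import Reals List.
Open Scope R_scope.

(* A finitely supported probability distribution is a list of
   (weight, atom) pairs. *)
Definition fdist := list (R * R).

Definition expect (d : fdist) (f : R -> R) : R :=
  fold_right (fun p acc => fst p * f (snd p) + acc) 0 d.

Definition is_dist_on (a b : R) (d : fdist) : Prop :=
  (forall p, In p d -> 0 <= fst p /\ a <= snd p <= b) /\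
  fold_right (fun p acc => fst p + acc) 0 d = 1.

(* Via x = (a+b)/2 + (b-a)/2 cos t, the power x^l is a cosine polynomial of degree l and
   |x - (a+b)/2| = (b-a)/2 |cos t|, so it suffices to find two distributions of the angle t
   with equal cosine moments up to degree n = 2s whose expectations of |cos t| differ by
   order 1/n.

   On the grid phi_j = 2 pi j / (4n), weighting by the Fejer kernel
   F_N(phi) = sin^2(N phi/2) / sin^2(phi/2) integrates low frequencies exactly: for N + k <= 4n,
   sum_j F_N(phi_j) cos(c + k phi_j) = 4n (N - k)_+ cos c.  Hence the distribution F_N with
   weights F_N(phi_j) / (4nN) at pi/2 + phi_j has k-th cosine moment cos(k pi/2) (1 - k/N),
   and P = 1/2 delta_{pi/2} + 1/2 F_n and Q = F_{2n} agree on all cosine moments of degree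
   at most n.

   Their |cos|-gap is (1/8n^2) sum_j (F_{2n} - F_n)(phi_j) |sin phi_j|.  With h = pi/(4n) the
   j-th term is 2 (sin^2(j pi/2) - sin^2(j pi/4)) |cot(j h)|, whose coefficient is 0, 1/2, -1,
   1/2 according to j mod 4; so the sum is a sum of second differences of |cot| with step h.
   They are nonnegative since |cot| is convex on either side of pi/2 (n even puts pi/2 between
   two blocks), and the first one is at least 1/(6h) because |cot t| behaves like 1/t at 0. *)

From Stdlib Require Import Reals List Lra Lia.
Open Scope R_scope.

Fixpoint rsum (F : nat -> R) (n : nat) : R :=
  match n with O => 0 | S n' => rsum F n' + F n' end.

Lemma rsum_S F n : rsum F (S n) = rsum F n + F n.
Proof. reflexivity. Qed.

Lemma rsum_ext F G n : (forall j, (j < n)%nat -> F j = G j) -> rsum F n = rsum G n.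
Proof.
  induction n as [|n IH]; intros H; simpl; [reflexivity|].
  rewrite IH by (intros; apply H; lia).
  rewrite H by lia; reflexivity.
Qed.

Lemma rsum_plus F G n : rsum (fun j => F j + G j) n = rsum F n + rsum G n.
Proof. induction n as [|n IH]; simpl; [|rewrite IH]; ring. Qed.

Lemma rsum_scal_l c F n : rsum (fun j => c * F j) n = c * rsum F n.
Proof. induction n as [|n IH]; simpl; [|rewrite IH]; ring. Qed.

Lemma rsum_const c n : rsum (fun _ => c) n = INR n * c.
Proof. induction n as [|n IH]; simpl rsum; [simpl|rewrite IH, S_INR]; ring. Qed.

Lemma rsum_telescope u n : rsum (fun j => u (S j) - u j) n = u n - u O.
Proof. induction n as [|n IH]; simpl; [|rewrite IH]; ring. Qed.

Lemma rsum_nonneg F n : (forall j, (j < n)%nat -> 0 <= F j) -> 0 <= rsum F n.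
Proof.
  induction n as [|n IH]; intros H; simpl; [lra|].
  specialize (H n ltac:(lia)) as Hn.
  enough (0 <= rsum F n) by lra.
  apply IH; intros; apply H; lia.
Qed.

Lemma rsum_add F m k : rsum F (m + k) = rsum F m + rsum (fun r => F (m + r)%nat) k.
Proof.
  induction k as [|k IH]; simpl; [rewrite Nat.add_0_r; ring|].
  rewrite Nat.add_succ_r; simpl; rewrite IH; ring.
Qed.

Lemma rsum_blocks F k n :
  rsum F (n * k) = rsum (fun q => rsum (fun r => F (q * k + r)%nat) k) n.
Proof.
  induction n as [|n IH]; [reflexivity|].
  replace (S n * k)%nat with (n * k + k)%nat by lia.
  rewrite rsum_add, IH; reflexivity.
Qed.

Lemma rsum_ge_first F n : (1 <= n)%nat -> (forall j, (j < n)%nat -> 0 <= F j) ->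
  F O <= rsum F n.
Proof.
  intros Hn H; replace n with (1 + (n - 1))%nat by lia.
  rewrite rsum_add; cbn [rsum].
  enough (0 <= rsum (fun r => F (1 + r)%nat) (n - 1)) by lra.
  apply rsum_nonneg; intros; apply H; lia.
Qed.

Lemma expect_app d1 d2 f : expect (d1 ++ d2) f = expect d1 f + expect d2 f.
Proof. induction d1 as [|p d1 IH]; simpl; [|rewrite IH]; ring. Qed.

Lemma expect_plus d f g : expect d (fun t => f t + g t) = expect d f + expect d g.
Proof. induction d as [|p d IH]; simpl; [|rewrite IH]; ring. Qed.

Lemma expect_scal d c f : expect d (fun t => c * f t) = c * expect d f.
Proof. induction d as [|p d IH]; simpl; [|rewrite IH]; ring. Qed.

Lemma expect_ext d f g : (forall t, f t = g t) -> expect d f = expect d g.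
Proof. intros H; induction d as [|p d IH]; simpl; [|rewrite IH, H]; reflexivity. Qed.

Lemma expect_map_seq (G : nat -> R * R) n f :
  expect (map G (seq 0 n)) f = rsum (fun j => fst (G j) * f (snd (G j))) n.
Proof.
  induction n as [|n IH]; [reflexivity|].
  rewrite seq_S, map_app, expect_app, IH; simpl; ring.
Qed.

Definition dirac (x : R) : fdist := (1, x) :: nil.

Definition mixture (l : R) (d1 d2 : fdist) : fdist :=
  map (fun p => (l * fst p, snd p)) d1 ++ map (fun p => ((1 - l) * fst p, snd p)) d2.

Definition push (g : R -> R) (d : fdist) : fdist := map (fun p => (fst p, g (snd p))) d.

Lemma expect_dirac x f : expect (dirac x) f = f x.
Proof. simpl; ring. Qed.

Lemma expect_mixture l d1 d2 f :
  expect (mixture l d1 d2) f = l * expect d1 f + (1 - l) * expect d2 f.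
Proof.
  assert (Hscale : forall c d, expect (map (fun p => (c * fst p, snd p)) d) f = c * expect d f).
  { intros c d; induction d as [|p d IH]; simpl; [|rewrite IH]; ring. }
  unfold mixture; rewrite expect_app, !Hscale; reflexivity.
Qed.

Lemma expect_push g d f : expect (push g d) f = expect d (fun t => f (g t)).
Proof. induction d as [|p d IH]; simpl; [|rewrite IH]; reflexivity. Qed.

Definition is_prob (d : fdist) : Prop :=
  (forall p, In p d -> 0 <= fst p) /\ expect d (fun _ => 1) = 1.

Lemma is_prob_dirac x : is_prob (dirac x).
Proof. split; [intros p [<-|[]]; simpl; lra|apply expect_dirac]. Qed.

Lemma is_prob_mixture l d1 d2 : 0 <= l <= 1 -> is_prob d1 -> is_prob d2 ->
  is_prob (mixture l d1 d2).
Proof.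
  intros Hl [H1 E1] [H2 E2]; split.
  - unfold mixture; intros p Hp; apply in_app_or in Hp as [Hp|Hp];
      apply in_map_iff in Hp as [q [<- Hq]]; simpl.
    + apply Rmult_le_pos; [lra|auto].
    + apply Rmult_le_pos; [lra|auto].
  - rewrite expect_mixture, E1, E2; ring.
Qed.

Lemma is_dist_on_push a b g d : is_prob d -> (forall t, a <= g t <= b) ->
  is_dist_on a b (push g d).
Proof.
  intros [Hw Hsum] Hg; split.
  - unfold push; intros p Hp; apply in_map_iff in Hp as [q [<- Hq]]; simpl; auto.
  - rewrite <- Hsum; clear Hw Hsum.
    induction d as [|p d IH]; simpl; [|rewrite IH]; ring.
Qed.

Inductive cos_poly (d : nat) : (R -> R) -> Prop :=
| cos_poly_cos k : (k <= d)%nat -> cos_poly d (fun t => cos (INR k * t))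
| cos_poly_plus f g : cos_poly d f -> cos_poly d g -> cos_poly d (fun t => f t + g t)
| cos_poly_scal c f : cos_poly d f -> cos_poly d (fun t => c * f t)
| cos_poly_ext f g : cos_poly d f -> (forall t, f t = g t) -> cos_poly d g.

Lemma cos_poly_le d d' f : (d <= d')%nat -> cos_poly d f -> cos_poly d' f.
Proof.
  intros Hd Hf; induction Hf.
  - apply cos_poly_cos; lia.
  - now apply cos_poly_plus.
  - now apply cos_poly_scal.
  - now apply cos_poly_ext with f.
Qed.

Lemma cos_poly_mul_cos d f : cos_poly d f -> cos_poly (S d) (fun t => cos t * f t).
Proof.
  intros Hf; induction Hf as [k Hk| | |f g _ IH Hfg].
  - destruct k as [|k].
    + apply cos_poly_ext with (fun t => cos (INR 1 * t)); [apply cos_poly_cos; lia|].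
      intros t; simpl; rewrite Rmult_0_l, Rmult_1_l, cos_0; ring.
    + apply cos_poly_ext with (fun t => /2 * cos (INR (S (S k)) * t) + /2 * cos (INR k * t)).
      { apply cos_poly_plus; apply cos_poly_scal, cos_poly_cos; lia. }
      intros t; rewrite !S_INR.
      replace ((INR k + 1 + 1) * t) with ((INR k + 1) * t + t) by ring.
      replace (INR k * t) with ((INR k + 1) * t - t) by ring.
      rewrite cos_plus, cos_minus; field.
  - apply cos_poly_ext with (fun t => cos t * f t + cos t * g t); [now apply cos_poly_plus|].
    intros; ring.
  - apply cos_poly_ext with (fun t => c * (cos t * f t)); [now apply cos_poly_scal|].
    intros; ring.
  - apply cos_poly_ext with (fun t => cos t * f t); [exact IH|].
    intros; rewrite Hfg; reflexivity.
Qed.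

Lemma cos_poly_pow m r l : cos_poly l (fun t => (m + r * cos t) ^ l).
Proof.
  induction l as [|l IH].
  - apply cos_poly_ext with (fun t => cos (INR 0 * t)); [apply cos_poly_cos; lia|].
    intros; simpl; rewrite Rmult_0_l, cos_0; reflexivity.
  - apply cos_poly_ext with (fun t => m * (m + r * cos t) ^ l + r * (cos t * (m + r * cos t) ^ l)).
    + apply cos_poly_plus; apply cos_poly_scal; [apply cos_poly_le with l; auto|].
      now apply cos_poly_mul_cos.
    + intros; simpl; ring.
Qed.

Lemma expect_cos_poly_eq d d1 d2 f :
  (forall k, (k <= d)%nat ->
     expect d1 (fun t => cos (INR k * t)) = expect d2 (fun t => cos (INR k * t))) ->
  cos_poly d f -> expect d1 f = expect d2 f.
Proof.
  intros Hmom Hf; induction Hf as [k Hk|f g _ IHf _ IHg|c f _ IH|f g _ IH Hfg].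
  - now apply Hmom.
  - now rewrite !expect_plus, IHf, IHg.
  - now rewrite !expect_scal, IH.
  - now rewrite <- (expect_ext d1 f g Hfg), <- (expect_ext d2 f g Hfg).
Qed.

(** * Quadrature with the Fejer kernel *)

Definition grid (M j : nat) : R := INR j * (2 * PI / INR M).

Lemma sum_cos_grid M p c : (0 < p < M)%nat ->
  rsum (fun j => cos (c + INR p * grid M j)) M = 0.
Proof.
  intros Hp.
  assert (HM : 0 < INR M) by (apply lt_0_INR; lia).
  assert (HpM : 0 < INR p < INR M) by (split; [apply lt_0_INR|apply lt_INR]; lia).
  set (w := INR p * (2 * PI / INR M)).
  assert (Hsin : 0 < sin (w / 2)).
  { pose proof PI_RGT_0.
    assert (E : w / 2 = PI * (INR p / INR M)) by (unfold w; field; lra).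
    assert (INR p / INR M < 1) by (apply (Rmult_lt_reg_r (INR M)); [lra|]; field_simplify; lra).
    assert (0 < INR p / INR M) by (apply Rdiv_lt_0_compat; lra).
    apply sin_gt_0; rewrite E; nra. }
  (* 2 sin(w/2) cos x = sin (x + w/2) - sin (x - w/2) makes the sum telescope *)
  set (u := fun j => sin (c + (INR j - 1/2) * w)).
  assert (Htele : rsum (fun j => 2 * sin (w / 2) * cos (c + INR p * grid M j)) M = u M - u O).
  { rewrite <- rsum_telescope; apply rsum_ext; intros j _.
    unfold u, grid; rewrite S_INR.
    replace (c + (INR j + 1 - 1/2) * w) with ((c + INR p * (INR j * (2 * PI / INR M))) + w / 2)
      by (unfold w; field; lra).
    replace (c + (INR j - 1/2) * w) with ((c + INR p * (INR j * (2 * PI / INR M))) - w / 2)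
      by (unfold w; field; lra).
    rewrite sin_plus, sin_minus; ring. }
  assert (Hper : u M = u O).
  { unfold u; replace (c + (INR M - 1/2) * w) with ((c + (INR 0 - 1/2) * w) + 2 * INR p * PI)
      by (unfold w; simpl; field; lra).
    apply sin_period. }
  rewrite Hper, Rminus_diag, rsum_scal_l in Htele.
  apply Rmult_integral in Htele as [H|H]; [lra|exact H].
Qed.

Lemma sum_cos_cos_grid M m k c : (1 <= m)%nat -> (k + m < M)%nat ->
  rsum (fun j => cos (INR m * grid M j) * cos (c + INR k * grid M j)) M =
  if Nat.eqb m k then INR M * cos c / 2 else 0.
Proof.
  intros Hm Hkm.
  rewrite (rsum_ext _ (fun j => / 2 * cos (c + INR (k + m) * grid M j)
                               + / 2 * cos (c + (INR k - INR m) * grid M j))).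
  2:{ intros j _; rewrite plus_INR.
      replace (c + (INR k + INR m) * grid M j) with ((c + INR k * grid M j) + INR m * grid M j) by ring.
      replace (c + (INR k - INR m) * grid M j) with ((c + INR k * grid M j) - INR m * grid M j) by ring.
      rewrite (cos_plus (c + _)), (cos_minus (c + _)); field. }
  rewrite rsum_plus, !rsum_scal_l, sum_cos_grid by lia.
  destruct (Nat.eqb_spec m k) as [->|Hne].
  - rewrite (rsum_ext _ (fun _ => cos c)) by (intros; f_equal; ring).
    rewrite rsum_const; field.
  - destruct (Nat.lt_ge_cases m k).
    + rewrite (rsum_ext _ (fun j => cos (c + INR (k - m) * grid M j)))
        by (intros; rewrite minus_INR by lia; reflexivity).
      rewrite sum_cos_grid by lia; ring.
    + rewrite (rsum_ext _ (fun j => cos (- c + INR (m - k) * grid M j))).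
      * rewrite sum_cos_grid by lia; ring.
      * intros; rewrite minus_INR by lia; rewrite <- cos_neg; f_equal; ring.
Qed.

Definition dirichlet (r : nat) (p : R) : R := 1 + 2 * rsum (fun m => cos (INR (S m) * p)) r.

Definition fejer (N : nat) (p : R) : R := rsum (fun r => dirichlet r p) N.

Lemma sum_dirichlet_grid M r k c : (r + k < M)%nat ->
  rsum (fun j => dirichlet r (grid M j) * cos (c + INR k * grid M j)) M =
  if Nat.leb k r then INR M * cos c else 0.
Proof.
  induction r as [|r IH]; intros Hrk.
  - unfold dirichlet; simpl rsum.
    rewrite (rsum_ext _ (fun j => cos (c + INR k * grid M j))) by (intros; ring).
    destruct k as [|k]; simpl Nat.leb.
    + rewrite (rsum_ext _ (fun _ => cos c)) by (intros; simpl; f_equal; ring).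
      apply rsum_const.
    + apply sum_cos_grid; lia.
  - rewrite (rsum_ext _ (fun j => dirichlet r (grid M j) * cos (c + INR k * grid M j)
        + 2 * (cos (INR (S r) * grid M j) * cos (c + INR k * grid M j))))
      by (intros; unfold dirichlet; rewrite rsum_S; ring).
    rewrite rsum_plus, rsum_scal_l, IH, sum_cos_cos_grid by lia.
    destruct (Nat.leb_spec k r), (Nat.eqb_spec (S r) k), (Nat.leb_spec k (S r));
      try lia; field.
Qed.

(* Truncated subtraction is intended: for k >= N the sum vanishes. *)
Lemma sum_fejer_grid M N k c : (N + k <= M)%nat ->
  rsum (fun j => fejer N (grid M j) * cos (c + INR k * grid M j)) M = INR M * cos c * INR (N - k).
Proof.
  induction N as [|N IH]; intros HNk.
  - unfold fejer; simpl rsum.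
    rewrite (rsum_ext _ (fun _ => 0)) by (intros; ring).
    rewrite rsum_const; simpl; ring.
  - rewrite (rsum_ext _ (fun j => fejer N (grid M j) * cos (c + INR k * grid M j)
        + dirichlet N (grid M j) * cos (c + INR k * grid M j)))
      by (intros; unfold fejer; rewrite rsum_S; ring).
    rewrite rsum_plus, IH, sum_dirichlet_grid by lia.
    destruct (Nat.leb_spec k N).
    + replace (S N - k)%nat with (S (N - k)) by lia; rewrite S_INR; ring.
    + replace (S N - k)%nat with O by lia; replace (N - k)%nat with O by lia; simpl; ring.
Qed.

Lemma dirichlet_mul_sin r p : dirichlet r p * sin (p / 2) = sin ((2 * INR r + 1) * (p / 2)).
Proof.
  induction r as [|r IH].
  - unfold dirichlet; simpl rsum; simpl INR; replace ((2 * 0 + 1) * (p / 2)) with (p / 2) by ring; ring.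
  - unfold dirichlet in *; rewrite rsum_S.
    replace ((1 + 2 * (rsum (fun m => cos (INR (S m) * p)) r + cos (INR (S r) * p))) * sin (p / 2))
      with ((1 + 2 * rsum (fun m => cos (INR (S m) * p)) r) * sin (p / 2)
            + 2 * cos (INR (S r) * p) * sin (p / 2)) by ring.
    rewrite IH, S_INR.
    replace ((2 * (INR r + 1) + 1) * (p / 2)) with ((INR r + 1) * p + p / 2) by field.
    replace ((2 * INR r + 1) * (p / 2)) with ((INR r + 1) * p - p / 2) by field.
    rewrite sin_plus, sin_minus; ring.
Qed.

Lemma fejer_mul_sin_sq N p : fejer N p * sin (p / 2) ^ 2 = sin (INR N * (p / 2)) ^ 2.
Proof.
  induction N as [|N IH].
  - unfold fejer; simpl; rewrite !Rmult_0_l, sin_0; ring.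
  - unfold fejer in *; rewrite rsum_S, S_INR.
    replace ((rsum (fun r => dirichlet r p) N + dirichlet N p) * sin (p / 2) ^ 2)
      with (rsum (fun r => dirichlet r p) N * sin (p / 2) ^ 2
            + dirichlet N p * sin (p / 2) * sin (p / 2)) by ring.
    rewrite IH, dirichlet_mul_sin.
    replace ((2 * INR N + 1) * (p / 2)) with (INR N * (p / 2) + (INR N * (p / 2) + p / 2)) by field.
    replace ((INR N + 1) * (p / 2)) with (INR N * (p / 2) + p / 2) by field.
    set (x := INR N * (p / 2)); set (y := p / 2).
    rewrite !sin_plus, cos_plus.
    pose proof (sin2_cos2 x); pose proof (sin2_cos2 y); unfold Rsqr in *; nra.
Qed.

Lemma cos_mult_of_cos_eq_1 p m : cos p = 1 -> cos (INR m * p) = 1.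
Proof.
  intros Hp.
  assert (Hs : sin p = 0) by (pose proof (sin2_cos2 p); unfold Rsqr in *; nra).
  induction m as [|m IH]; [simpl; rewrite Rmult_0_l; apply cos_0|].
  rewrite S_INR, Rmult_plus_distr_r, Rmult_1_l, cos_plus, IH, Hp, Hs; ring.
Qed.

Lemma fejer_nonneg N p : 0 <= fejer N p.
Proof.
  destruct (Req_dec (sin (p / 2)) 0) as [Hs|Hs].
  - assert (Hc : cos p = 1).
    { replace p with (2 * (p / 2)) by field; rewrite cos_2a_sin, Hs; ring. }
    apply rsum_nonneg; intros r _; unfold dirichlet.
    rewrite (rsum_ext _ (fun _ => 1)) by (intros; apply cos_mult_of_cos_eq_1, Hc).
    rewrite rsum_const; pose proof (pos_INR r); lra.
  - assert (Hsq : 0 < sin (p / 2) ^ 2) by (simpl; rewrite Rmult_1_r; apply Rsqr_pos_lt, Hs).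
    apply Rmult_le_reg_r with (sin (p / 2) ^ 2); [exact Hsq|].
    rewrite fejer_mul_sin_sq, Rmult_0_l; apply pow2_ge_0.
Qed.

Definition fejer_dist (M N : nat) (c : R) : fdist :=
  map (fun j => (fejer N (grid M j) / (INR M * INR N), c + grid M j)) (seq 0 M).

Lemma expect_fejer_dist M N c f :
  expect (fejer_dist M N c) f =
  rsum (fun j => fejer N (grid M j) * f (c + grid M j)) M / (INR M * INR N).
Proof.
  unfold fejer_dist; rewrite expect_map_seq; simpl.
  unfold Rdiv; rewrite (Rmult_comm (rsum _ _)), <- rsum_scal_l.
  apply rsum_ext; intros; ring.
Qed.

Lemma expect_fejer_dist_cos M N k c : (1 <= N)%nat -> (N + k <= M)%nat ->
  expect (fejer_dist M N c) (fun t => cos (INR k * t)) = cos (INR k * c) * INR (N - k) / INR N.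
Proof.
  intros HN HNk.
  assert (0 < INR N) by (apply lt_0_INR; lia).
  assert (0 < INR M) by (apply lt_0_INR; lia).
  rewrite expect_fejer_dist.
  rewrite (rsum_ext _ (fun j => fejer N (grid M j) * cos (INR k * c + INR k * grid M j)))
    by (intros; rewrite Rmult_plus_distr_l; reflexivity).
  rewrite sum_fejer_grid by lia; field; lra.
Qed.

Lemma is_prob_fejer_dist M N c : (1 <= N <= M)%nat -> is_prob (fejer_dist M N c).
Proof.
  intros HNM.
  assert (0 < INR N) by (apply lt_0_INR; lia).
  assert (0 < INR M) by (apply lt_0_INR; lia).
  split.
  - unfold fejer_dist; intros p Hp; apply in_map_iff in Hp as [j [<- _]]; simpl.
    apply Rmult_le_pos; [apply fejer_nonneg|left; apply Rinv_0_lt_compat; nra].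
  - rewrite (expect_ext _ _ (fun t => cos (INR 0 * t)))
      by (intros; simpl; rewrite Rmult_0_l, cos_0; reflexivity).
    rewrite expect_fejer_dist_cos by lia.
    simpl INR; rewrite Rmult_0_l, cos_0, Nat.sub_0_r; field; lra.
Qed.

Definition angle_P (n : nat) : fdist := mixture (/ 2) (dirac (PI / 2)) (fejer_dist (4 * n) n (PI / 2)).
Definition angle_Q (n : nat) : fdist := fejer_dist (4 * n) (2 * n) (PI / 2).

Lemma is_prob_angle_P n : (1 <= n)%nat -> is_prob (angle_P n).
Proof. intros; apply is_prob_mixture; [lra|apply is_prob_dirac|apply is_prob_fejer_dist; lia]. Qed.

Lemma is_prob_angle_Q n : (1 <= n)%nat -> is_prob (angle_Q n).
Proof. intros; apply is_prob_fejer_dist; lia. Qed.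

Lemma angle_cos_moments_eq n k : (1 <= n)%nat -> (k <= n)%nat ->
  expect (angle_P n) (fun t => cos (INR k * t)) = expect (angle_Q n) (fun t => cos (INR k * t)).
Proof.
  intros Hn Hk.
  assert (0 < INR n) by (apply lt_0_INR; lia).
  unfold angle_P, angle_Q.
  rewrite expect_mixture, expect_dirac, !expect_fejer_dist_cos by lia.
  rewrite !minus_INR, mult_INR by lia; simpl INR; field; lra.
Qed.

Definition fejer_gap (n j : nat) : R :=
  (fejer (2 * n) (grid (4 * n) j) - fejer n (grid (4 * n) j)) * Rabs (sin (grid (4 * n) j)).

Lemma angle_abs_cos_gap n : (1 <= n)%nat ->
  expect (angle_Q n) (fun t => Rabs (cos t)) - expect (angle_P n) (fun t => Rabs (cos t)) =
  rsum (fejer_gap n) (4 * n) / (8 * INR n ^ 2).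
Proof.
  intros Hn.
  assert (0 < INR n) by (apply lt_0_INR; lia).
  assert (Hcos : forall x, Rabs (cos (PI / 2 + x)) = Rabs (sin x))
    by (intros; rewrite sin_cos, Rabs_Ropp; reflexivity).
  unfold angle_P, angle_Q.
  rewrite expect_mixture, expect_dirac, cos_PI2, Rabs_R0, !expect_fejer_dist.
  rewrite !(rsum_ext (fun j => fejer _ (grid (4 * n) j) * Rabs (cos (PI / 2 + grid (4 * n) j)))
                     (fun j => fejer _ (grid (4 * n) j) * Rabs (sin (grid (4 * n) j))))
    by (intros; rewrite Hcos; reflexivity).
  rewrite (rsum_ext (fejer_gap n) (fun j => fejer (2 * n) (grid (4 * n) j) * Rabs (sin (grid (4 * n) j))
                               + -1 * (fejer n (grid (4 * n) j) * Rabs (sin (grid (4 * n) j)))))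
    by (intros; unfold fejer_gap; ring).
  rewrite rsum_plus, rsum_scal_l, !mult_INR; simpl INR; field; lra.
Qed.

(** * Second differences of |cot| *)

Definition abs_cot (t : R) : R := Rabs (cos t) / sin t.

Lemma cot_second_difference t h : sin (t - h) <> 0 -> sin t <> 0 -> sin (t + h) <> 0 ->
  cos (t - h) / sin (t - h) - 2 * (cos t / sin t) + cos (t + h) / sin (t + h) =
  2 * cos t * sin h ^ 2 / (sin (t - h) * sin t * sin (t + h)).
Proof.
  intros Hm H0 Hp.
  assert (E : sin t ^ 2 + cos t ^ 2 = 1) by (rewrite <- (sin2_cos2 t); unfold Rsqr; ring).
  rewrite <- (Rmult_1_r (2 * cos t * sin h ^ 2)), <- E.
  rewrite sin_minus, cos_minus, sin_plus, cos_plus in *.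
  field; auto.
Qed.

Lemma abs_cot_second_difference_nonneg t h :
  0 < h -> 0 < t - h -> t + h < PI -> t + h <= PI / 2 \/ PI / 2 <= t - h ->
  0 <= abs_cot (t - h) - 2 * abs_cot t + abs_cot (t + h).
Proof.
  intros Hh Hlo Hhi Hside.
  assert (Sm : 0 < sin (t - h)) by (apply sin_gt_0; lra).
  assert (S0 : 0 < sin t) by (apply sin_gt_0; lra).
  assert (Sp : 0 < sin (t + h)) by (apply sin_gt_0; lra).
  assert (Hd : 0 <= 2 * Rabs (cos t) * sin h ^ 2 / (sin (t - h) * sin t * sin (t + h))).
  { apply Rmult_le_pos; [pose proof (Rabs_pos (cos t)); pose proof (pow2_ge_0 (sin h)); nra|].
    left; apply Rinv_0_lt_compat; repeat apply Rmult_lt_0_compat; assumption. }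
  pose proof (cot_second_difference t h ltac:(lra) ltac:(lra) ltac:(lra)) as E.
  unfold abs_cot; destruct Hside.
  - rewrite !Rabs_right in * by (apply Rle_ge, cos_ge_0; lra); lra.
  - rewrite !Rabs_left1 in * by (apply cos_le_0; lra).
    unfold Rdiv in *; lra.
Qed.

Lemma abs_cot_second_difference_first h : 0 < h <= PI / 8 ->
  1 / (6 * h) <= abs_cot h - 2 * abs_cot (2 * h) + abs_cot (3 * h).
Proof.
  intros Hh; pose proof PI_RGT_0; pose proof PI_4.
  assert (S1 : 0 < sin h) by (apply sin_gt_0; lra).
  assert (S3 : 0 < sin (3 * h) < 3 * h) by (split; [apply sin_gt_0|apply sin_lt_x]; lra).
  assert (C1 : 0 < cos h <= 1) by (split; [apply cos_gt_0|apply COS_bound]; lra).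
  assert (C2 : 1 / 2 <= cos (2 * h)).
  { rewrite cos_2a_sin; pose proof (sin_lt_x h ltac:(lra)); nra. }
  unfold abs_cot; rewrite !Rabs_right by (apply Rle_ge, cos_ge_0; lra).
  pose proof (cot_second_difference (2 * h) h) as E.
  replace (2 * h - h) with h in E by ring; replace (2 * h + h) with (3 * h) in E by ring.
  rewrite E, sin_2a by (apply Rgt_not_eq, sin_gt_0; lra).
  replace (2 * cos (2 * h) * sin h ^ 2 / (sin h * (2 * sin h * cos h) * sin (3 * h)))
    with (cos (2 * h) / (cos h * sin (3 * h))) by (field; lra).
  apply Rle_trans with (1 / 2 / (cos h * sin (3 * h))).
  - replace (1 / (6 * h)) with (1 / 2 / (3 * h)) by (field; lra).
    apply Rmult_le_compat_l; [lra|].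
    apply Rinv_le_contravar; [apply Rmult_lt_0_compat|]; nra.
  - apply Rmult_le_compat_r; [left; apply Rinv_0_lt_compat, Rmult_lt_0_compat|]; lra.
Qed.

Lemma fejer_gap_eq n j : (1 <= n)%nat -> (j < 4 * n)%nat ->
  fejer_gap n j =
  2 * (sin (INR j * (PI / 2)) ^ 2 - sin (INR j * (PI / 4)) ^ 2) * abs_cot (INR j * (PI / INR (4 * n))).
Proof.
  intros Hn Hj.
  assert (Hn' : 0 < INR n) by (apply lt_0_INR; lia).
  set (x := INR j * (PI / INR (4 * n))).
  assert (Hgrid : grid (4 * n) j = 2 * x) by (unfold grid, x; rewrite mult_INR; simpl; field; lra).
  unfold fejer_gap; rewrite Hgrid.
  destruct j as [|j].
  - unfold x; simpl INR; rewrite !Rmult_0_l, Rmult_0_r, sin_0, Rabs_R0; ring.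
  - assert (Hx : 0 < x < PI).
    { pose proof PI_RGT_0.
      assert (H4 : INR (4 * n) = 4 * INR n) by (rewrite mult_INR; simpl; ring).
      assert (1 <= INR (S j) < 4 * INR n)
        by (rewrite <- H4; split; [apply (le_INR 1)|apply lt_INR]; lia).
      unfold x; rewrite H4.
      replace (INR (S j) * (PI / (4 * INR n))) with (PI * (INR (S j) / (4 * INR n))) by (field; lra).
      assert (0 < INR (S j) / (4 * INR n) < 1).
      { split; [apply Rdiv_lt_0_compat; lra|].
        apply (Rmult_lt_reg_r (4 * INR n)); [lra|]; field_simplify; lra. }
      split; nra. }
    assert (Sx : 0 < sin x) by (apply sin_gt_0; lra).
    assert (Hfejer : forall N, fejer N (2 * x) = sin (INR N * x) ^ 2 / sin x ^ 2).
    { intros N; pose proof (fejer_mul_sin_sq N (2 * x)) as E.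
      replace (2 * x / 2) with x in E by field; rewrite <- E; field; lra. }
    rewrite !Hfejer, sin_2a, !Rabs_mult, (Rabs_right 2), (Rabs_right (sin x)) by lra.
    replace (INR (2 * n) * x) with (INR (S j) * (PI / 2))
      by (unfold x; rewrite !mult_INR; simpl; field; lra).
    replace (INR n * x) with (INR (S j) * (PI / 4)) by (unfold x; rewrite mult_INR; simpl; field; lra).
    unfold abs_cot; fold x; field; lra.
Qed.

Lemma sin_sq_add_mult_PI x q : sin (x + INR q * PI) ^ 2 = sin x ^ 2.
Proof.
  induction q as [|q IH]; [simpl; rewrite Rmult_0_l, Rplus_0_r; reflexivity|].
  rewrite S_INR, <- IH.
  replace (x + (INR q + 1) * PI) with (x + INR q * PI + PI) by ring.
  rewrite neg_sin; ring.
Qed.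

Lemma fejer_gap_block n q : (1 <= n)%nat -> (q < n)%nat ->
  rsum (fun r => fejer_gap n (q * 4 + r)) 4 =
  abs_cot (INR (q * 4 + 1) * (PI / INR (4 * n))) - 2 * abs_cot (INR (q * 4 + 2) * (PI / INR (4 * n)))
  + abs_cot (INR (q * 4 + 3) * (PI / INR (4 * n))).
Proof.
  intros Hn Hq.
  assert (Half : forall r, sin (INR (q * 4 + r) * (PI / 2)) ^ 2 = sin (INR r * (PI / 2)) ^ 2).
  { intros r; replace (INR (q * 4 + r) * (PI / 2)) with (INR r * (PI / 2) + 2 * INR q * PI)
      by (rewrite plus_INR, mult_INR; simpl; field).
    rewrite sin_period; reflexivity. }
  assert (Quarter : forall r, sin (INR (q * 4 + r) * (PI / 4)) ^ 2 = sin (INR r * (PI / 4)) ^ 2).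
  { intros r; replace (INR (q * 4 + r) * (PI / 4)) with (INR r * (PI / 4) + INR q * PI)
      by (rewrite plus_INR, mult_INR; simpl; field).
    apply sin_sq_add_mult_PI. }
  assert (Hsqrt : (1 / sqrt 2) ^ 2 = 1 / 2).
  { pose proof (sqrt_sqrt 2 ltac:(lra)); pose proof (sqrt_lt_R0 2 ltac:(lra)).
    replace ((1 / sqrt 2) ^ 2) with (1 / (sqrt 2 * sqrt 2)) by (field; lra).
    congruence. }
  rewrite !rsum_S; cbn [rsum].
  rewrite !fejer_gap_eq, !Half, !Quarter by lia.
  replace (INR 0) with 0 by reflexivity; replace (INR 1) with 1 by reflexivity.
  replace (INR 2 * (PI / 2)) with PI by (simpl; field).
  replace (INR 2 * (PI / 4)) with (PI / 2) by (simpl; field).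
  replace (INR 3 * (PI / 2)) with (3 * (PI / 2)) by (simpl; ring).
  replace (INR 3 * (PI / 4)) with (3 * (PI / 4)) by (simpl; ring).
  rewrite !Rmult_0_l, Rmult_1_l, Rmult_1_l, sin_0, sin_PI2, sin_PI4, sin_PI, sin_3PI2, sin_3PI4, Hsqrt.
  field.
Qed.

Lemma fejer_gap_sum_ge k : (1 <= k)%nat ->
  1 / (6 * (PI / INR (4 * (2 * k)))) <= rsum (fejer_gap (2 * k)) (4 * (2 * k)).
Proof.
  intros Hk; pose proof PI_RGT_0.
  set (h := PI / INR (4 * (2 * k))).
  assert (Hk' : 8 <= INR (4 * (2 * k))) by (replace 8 with (INR 8) by (simpl; ring); apply le_INR; lia).
  assert (Hh : 0 < h <= PI / 8).
  { split; [apply Rdiv_lt_0_compat; lra|].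
    apply Rmult_le_compat_l; [lra|apply Rinv_le_contravar; lra]. }
  assert (Hlt : forall i j, (i < j)%nat -> INR i * h < INR j * h)
    by (intros; apply Rmult_lt_compat_r; [lra|apply lt_INR; lia]).
  assert (Hle : forall i j, (i <= j)%nat -> INR i * h <= INR j * h)
    by (intros; apply Rmult_le_compat_r; [lra|apply le_INR; lia]).
  assert (Hk0 : 0 < INR k) by (apply lt_0_INR; lia).
  assert (Hhalf : INR (4 * k) * h = PI / 2).
  { unfold h; rewrite !mult_INR; simpl INR; field; lra. }
  assert (Hfull : INR (4 * (2 * k)) * h = PI) by (unfold h; field; lra).
  rewrite (Nat.mul_comm 4 (2 * k)), rsum_blocks.
  set (F := fun q => abs_cot (INR (q * 4 + 1) * h) - 2 * abs_cot (INR (q * 4 + 2) * h)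
                     + abs_cot (INR (q * 4 + 3) * h)).
  rewrite (rsum_ext _ F) by (intros; apply fejer_gap_block; lia).
  apply Rle_trans with (F O).
  { unfold F; replace (INR (0 * 4 + 1) * h) with h by (simpl; ring).
    replace (INR (0 * 4 + 2) * h) with (2 * h) by (simpl; ring).
    replace (INR (0 * 4 + 3) * h) with (3 * h) by (simpl; ring).
    apply abs_cot_second_difference_first, Hh. }
  apply rsum_ge_first; [lia|intros q Hq; unfold F].
  assert (E1 : INR (q * 4 + 2) * h - h = INR (q * 4 + 1) * h) by (rewrite !plus_INR; simpl; ring).
  assert (E3 : INR (q * 4 + 2) * h + h = INR (q * 4 + 3) * h) by (rewrite !plus_INR; simpl; ring).
  rewrite <- E1, <- E3.
  apply abs_cot_second_difference_nonneg; rewrite ?E1, ?E3; [lra| | |].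
  - pose proof (Hlt 0%nat (q * 4 + 1)%nat ltac:(lia)) as H0; change (INR 0) with 0 in H0; lra.
  - rewrite <- Hfull; apply Hlt; lia.
  - destruct (Nat.lt_ge_cases q k); [left|right]; rewrite <- Hhalf; apply Hle; lia.
Qed.

Lemma angle_abs_cos_gap_ge s : (1 <= s)%nat ->
  / (24 * PI * INR s) <=
  expect (angle_Q (2 * s)) (fun t => Rabs (cos t)) - expect (angle_P (2 * s)) (fun t => Rabs (cos t)).
Proof.
  intros Hs; pose proof PI_RGT_0.
  assert (0 < INR s) by (apply lt_0_INR; lia).
  rewrite angle_abs_cos_gap by lia.
  pose proof (fejer_gap_sum_ge s Hs) as Hsum.
  assert (E8 : INR (4 * (2 * s)) = 8 * INR s) by (rewrite !mult_INR; simpl; ring).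
  assert (E2 : INR (2 * s) = 2 * INR s) by (rewrite mult_INR; simpl; ring).
  rewrite E8 in Hsum; rewrite E2.
  apply Rle_trans with (1 / (6 * (PI / (8 * INR s))) / (8 * (2 * INR s) ^ 2)).
  - right; field; lra.
  - apply Rmult_le_compat_r; [|exact Hsum].
    left; apply Rinv_0_lt_compat; nra.
Qed.

Definition cos_param (a b t : R) : R := (a + b) / 2 + (b - a) / 2 * cos t.

Lemma cos_param_in a b t : a <= b -> a <= cos_param a b t <= b.
Proof. intros; unfold cos_param; pose proof (COS_bound t); split; nra. Qed.

Lemma abs_cos_param_sub_mid a b t : a <= b ->
  Rabs (cos_param a b t - (a + b) / 2) = (b - a) / 2 * Rabs (cos t).
Proof.
  intros; unfold cos_param.
  replace ((a + b) / 2 + (b - a) / 2 * cos t - (a + b) / 2) with ((b - a) / 2 * cos t) by ring.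
  rewrite Rabs_mult, (Rabs_right ((b - a) / 2)) by lra; reflexivity.
Qed.

Theorem proposition2 :
  exists c : R, 0 < c /\
    forall (s : nat), (1 <= s)%nat ->
    forall a b : R, 0 < a -> a < b ->
    exists P Q : fdist,
      is_dist_on a b P /\ is_dist_on a b Q /\
      (forall l : nat, (l <= s)%nat ->
         expect P (fun x => x ^ l) = expect Q (fun x => x ^ l)) /\
      Rabs (expect P (fun x => Rabs (x - (a + b) / 2))
            - expect Q (fun x => Rabs (x - (a + b) / 2)))
        >= c * (b - a) / INR s.
Proof.
  pose proof PI_RGT_0.
  exists (/ (48 * PI)); split; [apply Rinv_0_lt_compat; lra|].
  intros s Hs a b _ Hab.
  exists (push (cos_param a b) (angle_P (2 * s))), (push (cos_param a b) (angle_Q (2 * s))).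
  split; [apply is_dist_on_push; [apply is_prob_angle_P; lia|intros; apply cos_param_in; lra]|].
  split; [apply is_dist_on_push; [apply is_prob_angle_Q; lia|intros; apply cos_param_in; lra]|].
  split.
  - intros l Hl; rewrite !expect_push.
    apply expect_cos_poly_eq with (2 * s)%nat.
    + intros k Hk; apply angle_cos_moments_eq; lia.
    + apply cos_poly_le with l; [lia|apply cos_poly_pow].
  - assert (Hmid := fun t => abs_cos_param_sub_mid a b t (Rlt_le _ _ Hab)).
    rewrite !expect_push, !(expect_ext _ _ _ Hmid), !expect_scal.
    pose proof (angle_abs_cos_gap_ge s Hs) as Hgap.
    assert (0 < INR s) by (apply lt_0_INR; lia).
    assert (Hpos : 0 < / (24 * PI * INR s)) by (apply Rinv_0_lt_compat; nra).
    rewrite Rabs_left by nra.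
    apply Rle_ge; apply Rle_trans with ((b - a) / 2 * / (24 * PI * INR s)).
    + right; field; lra.
    + nra.
Qed.
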